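(* Let $\langle E,\rightarrow\rangle$ be a computation, $b_1,b_2$ regular predicates and $b=b_1\wedge b_2$. The graph $S_{\min}(E)$ has the same set of consistent cuts as the slice of $\langle E,\rightarrow\rangle$ with respect to $b$.
   Context: A computation is a directed graph $\langle E, \rightarrow\rangle$ whose vertices (events) are partitioned among processes $p_1,\dots,p_n$; events on each process are totally ordered, each process has an initial event and a final event, the path relation contains Lamport's happened-before relation, and all initial (resp. final) events lie in one strongly connected component. $\top$ is the set of final events and $\mathrm{succ}(e)$ the successor of $e$ on its process. A vertex subset $C$ is a consistent cut if for every edge $(u,v)$, $v\in C$ implies $u\in C$. A predicate is regular if whenever consistent cuts $C_1,C_2$ satisfy it, so do $C_1\cap C_2$ and $C_1\cup C_2$. The slice with respect to a predicate $c$ is a directed graph on $E$ whose consistent cuts include every consistent cut satisfying $c$ and which has the fewest consistent cuts among all such graphs. $F_c(e)[i]$ is the earliest event on $p_i$ reachable from $e$ in the slice with respect to $c$. $F_{\min}(e)[i]$ is whichever of $F_{b_1}(e)[i]$, $F_{b_2}(e)[i]$ occurs earlier on $p_i$. $S_{\min}(E)$ is the directed graph on $E$ with edges from each $e\notin\top$ to $\mathrm{succ}(e)$ and from each $e$ to $F_{\min}(e)[i]$ for every $i$. *)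

From mathcomp Require Import all_boot.
Set Implicit Arguments. Unset Strict Implicit. Unset Printing Implicit Defensive.

Section Computation.
Variables (n : nat) (E : finType) (arr : rel E) (proc : E -> 'I_n) (pos : E -> nat).

(* Events of one process are totally ordered by [pos]: e precedes f on the
   same process iff proc e = proc f and pos e < pos f. *)
Definition initial_ev (e : E) : bool :=
  [forall g, (proc g == proc e) ==> (pos e <= pos g)].
Definition final_ev (e : E) : bool :=
  [forall g, (proc g == proc e) ==> (pos g <= pos e)].

Definition is_succ (e f : E) : bool :=
  [&& proc f == proc e, pos e < pos f &
      [forall g, ((proc g == proc e) && (pos e < pos g)) ==> (pos f <= pos g)]].

Record is_computation : Prop := {
  pos_inj : forall e f, proc e = proc f -> pos e = pos f -> e = f;
  proc_nonempty : forall i : 'I_n, exists e, proc e = i;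
  hb_path : forall e f, proc e = proc f -> pos e < pos f -> connect arr e f;
  initial_scc : forall e f, initial_ev e -> initial_ev f -> connect arr e f;
  final_scc : forall e f, final_ev e -> final_ev f -> connect arr e f
}.

End Computation.

Definition cons_cut (E : finType) (G : rel E) (C : {set E}) : bool :=
  [forall u, forall v, G u v ==> (v \in C) ==> (u \in C)].

Definition cuts (E : finType) (G : rel E) : {set {set E}} :=
  [set C | cons_cut G C].

Definition regular (E : finType) (arr : rel E) (c : {set E} -> Prop) : Prop :=
  forall C1 C2, cons_cut arr C1 -> cons_cut arr C2 -> c C1 -> c C2 ->
    c (C1 :&: C2) /\ c (C1 :|: C2).

Definition is_slice (E : finType) (arr : rel E) (c : {set E} -> Prop) (G : rel E)
  : Prop :=
  (forall C, cons_cut arr C -> c C -> cons_cut G C) /\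
  (forall G' : rel E, (forall C, cons_cut arr C -> c C -> cons_cut G' C) ->
     #|cuts G| <= #|cuts G'|).

Definition earliest (n : nat) (E : finType) (proc : E -> 'I_n) (pos : E -> nat)
  (G : rel E) (e : E) (i : 'I_n) (f : E) : bool :=
  [&& proc f == i, connect G e f &
      [forall g, ((proc g == i) && connect G e g) ==> (pos f <= pos g)]].

Definition smin (n : nat) (E : finType) (proc : E -> 'I_n) (pos : E -> nat)
  (G1 G2 : rel E) : rel E :=
  fun e f =>
    (~~ final_ev proc pos e && is_succ proc pos e f) ||
    [exists i : 'I_n, exists f1 : E, exists f2 : E,
       [&& earliest proc pos G1 e i f1, earliest proc pos G2 e i f2 &
           f == (if pos f1 <= pos f2 then f1 else f2)]].

(* A slice for c has the same cuts as the relation "u -> v iff every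
   consistent cut satisfying c that contains v contains u".  The cuts of that
   relation are the unions of intersections of cuts satisfying c, so for a
   regular c they are exactly the cuts satisfying c together with the empty and
   the full cut.  Hence the cuts of the slice for b1 /\ b2 are the common cuts
   of the slices G1 and G2.  On the other hand, a cut of S_min(E) is closed
   under predecessors on each process (successor edges), and the F_min edge
   from u to p_i lands no later than any event of p_i reachable from u in G1 or
   G2; so the cuts of S_min(E) are also exactly the common cuts of G1 and G2. *)

From Stdlib Require Import ClassicalEpsilon.
From mathcomp Require Import all_boot.

Set Implicit Arguments. Unset Strict Implicit. Unset Printing Implicit Defensive.

Section ConsistentCuts.
Variable E : finType.
Implicit Types (G H K : rel E) (C D : {set E}) (Y : {set {set E}}).

Lemma cons_cutP G C :
  reflect (forall u v, G u v -> v \in C -> u \in C) (cons_cut G C).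
Proof.
apply: (iffP forallP) => [cutC u v Guv vC | cutC u].
  by move/forallP: (cutC u) => /(_ v); rewrite Guv vC.
by apply/forallP => v; apply/implyP => Guv; apply/implyP; apply: cutC.
Qed.

Lemma cons_cut0 G : cons_cut G set0.
Proof. by apply/cons_cutP => u v _; rewrite inE. Qed.

Lemma cons_cutT G : cons_cut G setT.
Proof. by apply/cons_cutP => u v _; rewrite inE. Qed.

Lemma cons_cutI G A B : cons_cut G A -> cons_cut G B -> cons_cut G (A :&: B).
Proof.
move=> /cons_cutP cutA /cons_cutP cutB; apply/cons_cutP => u v Guv.
by rewrite !inE => /andP[vA vB]; rewrite (cutA u v) ?(cutB u v).
Qed.

Lemma cons_cutU G A B : cons_cut G A -> cons_cut G B -> cons_cut G (A :|: B).
Proof.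
move=> /cons_cutP cutA /cons_cutP cutB; apply/cons_cutP => u v Guv.
by rewrite !inE => /orP[vA | vB]; [rewrite (cutA u v) | rewrite (cutB u v) ?orbT].
Qed.

Lemma cons_cut_connect G C u v : cons_cut G C -> connect G u v -> v \in C -> u \in C.
Proof.
move=> /cons_cutP cutC /connectP[p]; elim: p u => [|w p IHp] u /=; first by move=> _ ->.
by case/andP=> Guw /IHp reach_w last_v vC; apply: cutC Guw (reach_w last_v vC).
Qed.

Lemma connect_cuts_sub H K :
  (forall C, cons_cut H C -> cons_cut K C) -> subrel (connect K) (connect H).
Proof.
move=> cutsHK u v; pose C := [set w | connect H w v].
have cutC : cons_cut H C.
  by apply/cons_cutP => x y Hxy; rewrite !inE; apply: connect_trans (connect1 Hxy).
by move/(cons_cut_connect (cutsHK C cutC)); rewrite !inE connect0; apply.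
Qed.

Definition cut_rel Y : rel E := fun u v => [forall D in Y, (v \in D) ==> (u \in D)].

Lemma cut_rel_cut Y D : D \in Y -> cons_cut (cut_rel Y) D.
Proof. by move=> DY; apply/cons_cutP => u v /forall_inP/(_ D DY)/implyP. Qed.

Lemma cut_rel_min Y G :
  {in Y, forall D, cons_cut G D} -> forall C, cons_cut (cut_rel Y) C -> cons_cut G C.
Proof.
move=> cutsY C /cons_cutP cutC; apply/cons_cutP => u v Guv; apply: cutC.
apply/forall_inP => D DY; apply/implyP.
exact: (elimT (cons_cutP _ _) (cutsY D DY)) u v Guv.
Qed.

Lemma cut_rel_cut_ind Y (P : {set E} -> Prop) :
  P set0 -> P setT ->
  (forall A B, P A -> P B -> P (A :&: B)) -> (forall A B, P A -> P B -> P (A :|: B)) ->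
  {in Y, forall D, P D} -> forall C, cons_cut (cut_rel Y) C -> P C.
Proof.
move=> P0 PT PI PU PY C cutC.
pose M w := \bigcap_(D in Y | w \in D) D.
have -> : C = \bigcup_(w in C) M w.
  apply/setP => x; apply/idP/bigcupP => [xC | [w wC /bigcapP xM]].
    by exists x => //; apply/bigcapP => D /andP[].
  apply: (elimT (cons_cutP _ _) cutC x w) wC.
  by apply/forall_inP => D DY; apply/implyP => wD; apply: xM; rewrite DY.
apply: big_ind => // w _; apply: big_ind => // D /andP[DY _]; exact: PY.
Qed.

End ConsistentCuts.

Section Slices.
Variables (E : finType) (arr : rel E).
Implicit Types (c : {set E} -> Prop) (G : rel E) (C : {set E}).

Definition sat_cuts c : {set {set E}} :=
  [set D | cons_cut arr D && excluded_middle_informative (c D)].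

Lemma in_sat_cuts c D : reflect (cons_cut arr D /\ c D) (D \in sat_cuts c).
Proof. by rewrite inE; apply: (iffP andP) => -[-> /sumboolP]. Qed.

Lemma slice_cutsE c G : is_slice arr c G -> cuts G = cuts (cut_rel (sat_cuts c)).
Proof.
case=> sat_cutG minG.
have sub : cuts (cut_rel (sat_cuts c)) \subset cuts G.
  apply/subsetP => C; rewrite !inE; apply: cut_rel_min => D /in_sat_cuts[].
  exact: sat_cutG.
apply/esym/eqP; rewrite eqEcard sub /=; apply: minG => C arrC cC.
by apply: cut_rel_cut; apply/in_sat_cuts.
Qed.

Lemma slice_cons_cut c G C : is_slice arr c G -> cons_cut G C -> cons_cut arr C.
Proof.
move=> sliceG cutC; have : C \in cuts G by rewrite inE.
by rewrite (slice_cutsE sliceG) inE; apply: cut_rel_min => D /in_sat_cuts[].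
Qed.

Definition trivial_or_sat c C := [\/ C = set0, C = setT | cons_cut arr C /\ c C].

Lemma trivial_or_satI c A B : regular arr c ->
  trivial_or_sat c A -> trivial_or_sat c B -> trivial_or_sat c (A :&: B).
Proof.
move=> reg_c [->|->|[arrA cA]] [->|->|[arrB cB]];
  rewrite ?set0I ?setTI ?setI0 ?setIT; try by [constructor | constructor 3].
constructor 3; split; first exact: cons_cutI.
by case: (reg_c A B arrA arrB cA cB).
Qed.

Lemma trivial_or_satU c A B : regular arr c ->
  trivial_or_sat c A -> trivial_or_sat c B -> trivial_or_sat c (A :|: B).
Proof.
move=> reg_c [->|->|[arrA cA]] [->|->|[arrB cB]];
  rewrite ?set0U ?setTU ?setU0 ?setUT; try by [constructor | constructor 3].
constructor 3; split; first exact: cons_cutU.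
by case: (reg_c A B arrA arrB cA cB).
Qed.

Lemma slice_cutsP c G C : is_slice arr c G -> regular arr c ->
  reflect (trivial_or_sat c C) (cons_cut G C).
Proof.
move=> sliceG reg_c; apply: (iffP idP) => [cutC | [->|->|[arrC cC]]].
- have : C \in cuts G by rewrite inE.
  rewrite (slice_cutsE sliceG) inE; apply: (cut_rel_cut_ind (P := trivial_or_sat c)).
  + exact: Or31.
  + exact: Or32.
  + by move=> A B; apply: trivial_or_satI.
  + by move=> A B; apply: trivial_or_satU.
  + by move=> D /in_sat_cuts; apply: Or33.
- exact: cons_cut0.
- exact: cons_cutT.
- by case: sliceG => sat_cutG _; apply: sat_cutG.
Qed.

Lemma regularI (b1 b2 : {set E} -> Prop) :
  regular arr b1 -> regular arr b2 -> regular arr (fun C => b1 C /\ b2 C).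
Proof.
move=> reg1 reg2 C1 C2 arrC1 arrC2 [b1C1 b2C1] [b1C2 b2C2].
have [b1I b1U] := reg1 C1 C2 arrC1 arrC2 b1C1 b1C2.
by have [b2I b2U] := reg2 C1 C2 arrC1 arrC2 b2C1 b2C2.
Qed.

Lemma cuts_slice_and (b1 b2 : {set E} -> Prop) G1 G2 G :
  regular arr b1 -> regular arr b2 ->
  is_slice arr b1 G1 -> is_slice arr b2 G2 ->
  is_slice arr (fun C => b1 C /\ b2 C) G -> cuts G = cuts G1 :&: cuts G2.
Proof.
move=> reg1 reg2 slice1 slice2 slice; apply/setP => C; rewrite !inE.
apply/(slice_cutsP _ slice (regularI reg1 reg2))/andP.
  case=> [->|->|[arrC [b1C b2C]]]; rewrite ?cons_cut0 ?cons_cutT //.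
  by split; [apply/(slice_cutsP _ slice1 reg1) | apply/(slice_cutsP _ slice2 reg2)];
    apply: Or33.
case=> /(slice_cutsP _ slice1 reg1)[->|->|[arrC b1C]] cut2; [exact: Or31 | exact: Or32 |].
by case/(slice_cutsP _ slice2 reg2): cut2 => [->|->|[_ b2C]];
  [exact: Or31 | exact: Or32 | exact: Or33].
Qed.

End Slices.

Section SMin.
Variables (n : nat) (E : finType) (arr : rel E) (proc : E -> 'I_n) (pos : E -> nat).
Hypothesis comp : is_computation arr proc pos.

Lemma connect_proc_pos u v : proc u = proc v -> pos u <= pos v -> connect arr u v.
Proof.
move=> puv; rewrite leq_eqVlt => /orP[/eqP posuv | /(hb_path comp puv)//].
by rewrite (pos_inj comp puv posuv) connect0.
Qed.

Lemma final_ev_exists i : exists2 f, proc f = i & final_ev proc pos f.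
Proof.
have [e pe] := proc_nonempty comp i.
have [f /eqP pf maxf] := @arg_maxnP _ e (fun g => proc g == i) pos (introT eqP pe).
by exists f => //; apply/forall_inP => g /eqP pg; apply: maxf; rewrite pg -pf.
Qed.

Lemma connect_to_proc u i : exists2 g, proc g = i & connect arr u g.
Proof.
have [g pg final_g] := final_ev_exists i.
have [f pf final_f] := final_ev_exists (proc u).
exists g; rewrite // (connect_trans _ (final_scc comp final_f final_g)) //.
by apply: connect_proc_pos; rewrite ?pf //; move/forall_inP: final_f; apply; rewrite pf.
Qed.

Definition proc_step : rel E :=
  fun e f => ~~ final_ev proc pos e && is_succ proc pos e f.

Lemma proc_step_pred m v : proc m = proc v -> pos m < pos v ->
  exists2 g, pos m <= pos g < pos v & proc g = proc v /\ proc_step g v.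
Proof.
move=> pmv ltmv; pose before h := (proc h == proc v) && (pos h < pos v).
have before_m : before m by rewrite /before pmv eqxx.
have [g /andP[/eqP pg ltgv] maxg] := arg_maxnP pos before_m.
exists g; first by rewrite ltgv andbT; apply: maxg; rewrite /before pmv eqxx.
split=> //; apply/andP; split.
  by apply/forall_inP => /(_ v); rewrite pg eqxx leqNgt ltgv => /(_ isT).
rewrite /is_succ pg eqxx ltgv; apply/forall_inP => h /andP[/eqP ph ltgh].
rewrite leqNgt; apply: contraL ltgh => lthv; rewrite -leqNgt.
by apply: maxg; rewrite /before ph eqxx.
Qed.

Lemma connect_proc_step m v : proc m = proc v -> pos m <= pos v -> connect proc_step m v.
Proof.
have [k] := ubnP (pos v); elim: k v => // k IHk v ltvk pmv.
rewrite leq_eqVlt => /orP[/eqP posmv | ltmv]; first by rewrite (pos_inj comp pmv posmv).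
have [g /andP[lemg ltgv] [pgv step_gv]] := proc_step_pred pmv ltmv.
apply: connect_trans (connect1 step_gv); apply: IHk lemg; last by rewrite pmv.
exact: leq_trans ltgv _.
Qed.

Lemma earliest_exists (H : rel E) u g :
  connect H u g -> exists f, earliest proc pos H u (proc g) f.
Proof.
move=> Hug; pose reach h := (proc h == proc g) && connect H u h.
have reach_g : reach g by rewrite /reach eqxx.
have [f /andP[pf Huf] minf] := arg_minnP pos reach_g.
by exists f; rewrite /earliest pf Huf; apply/forall_inP.
Qed.

Variables G1 G2 : rel E.
Hypotheses (G1_arr : forall C, cons_cut G1 C -> cons_cut arr C)
           (G2_arr : forall C, cons_cut G2 C -> cons_cut arr C).
Notation S := (smin proc pos G1 G2).

Lemma smin_edge u i : exists m, [/\ S u m, proc m = i &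
  forall g, proc g = i -> connect G1 u g \/ connect G2 u g -> pos m <= pos g].
Proof.
have [g pg arr_ug] := connect_to_proc u i.
have [f1 earliest1] := earliest_exists (connect_cuts_sub G1_arr arr_ug).
have [f2 earliest2] := earliest_exists (connect_cuts_sub G2_arr arr_ug).
case/and3P: (earliest1) => /eqP p1 _ /forall_inP min1.
case/and3P: (earliest2) => /eqP p2 _ /forall_inP min2.
pose m := if pos f1 <= pos f2 then f1 else f2.
have [le_m1 le_m2] : pos m <= pos f1 /\ pos m <= pos f2.
  rewrite /m; case: (leqP (pos f1) (pos f2)) => [le12 | /ltnW lt21];
    by split; rewrite ?leqnn.
exists m; split.
- apply/orP; right; apply/existsP; exists (proc g).
  by apply/existsP; exists f1; apply/existsP; exists f2; rewrite earliest1 earliest2 /=.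
- by rewrite -pg /m; case: ifP.
move=> h ph; have {}ph : proc h == proc g by rewrite ph pg.
case=> Huh; [apply: leq_trans le_m1 (min1 h _) | apply: leq_trans le_m2 (min2 h _)].
all: exact/andP.
Qed.

Lemma cuts_smin : cuts S = cuts G1 :&: cuts G2.
Proof.
apply/setP => C; rewrite !inE; apply/idP/andP => [cutS | [cut1 cut2]].
  have back u v : connect G1 u v \/ connect G2 u v -> v \in C -> u \in C.
    move=> Huv vC; have [m [Sum pm minm]] := smin_edge u (proc v).
    apply: (elimT (cons_cutP _ _) cutS u m Sum).
    apply: cons_cut_connect cutS _ vC.
    move: (connect_proc_step pm (minm v erefl Huv)); apply: connect_sub => x y step_xy.
    by apply: connect1; apply/orP; left.
  by split; apply/cons_cutP => u v Guv; apply: back; [left | right]; apply: connect1.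
apply/cons_cutP => u v /orP[/andP[_ /and3P[/eqP pvu ltuv _]] | Fuv] vC.
  apply: cons_cut_connect cut1 _ vC.
  exact: connect_cuts_sub G1_arr _ _ (hb_path comp (esym pvu) ltuv).
case/existsP: Fuv => i /existsP[f1 /existsP[f2 /and3P[/and3P[_ Huf1 _] /and3P[_ Huf2 _]]]].
move/eqP=> vE; move: vC; rewrite vE; case: ifP => _.
  exact: cons_cut_connect cut1 Huf1.
exact: cons_cut_connect cut2 Huf2.
Qed.

End SMin.

Theorem theorem14 (n : nat) (E : finType) (arr : rel E) (proc : E -> 'I_n)
  (pos : E -> nat) (b1 b2 : {set E} -> Prop) (G1 G2 G : rel E) :
  is_computation arr proc pos ->
  regular arr b1 -> regular arr b2 ->
  is_slice arr b1 G1 -> is_slice arr b2 G2 ->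
  is_slice arr (fun C => b1 C /\ b2 C) G ->
  cuts (smin proc pos G1 G2) = cuts G.
Proof.
move=> comp reg1 reg2 slice1 slice2 slice.
rewrite (cuts_slice_and reg1 reg2 slice1 slice2 slice).
apply: (cuts_smin comp) => C.
  exact: slice_cons_cut slice1.
exact: slice_cons_cut slice2.
Qed.
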